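(* Consider a GND instance, a reply $\varrho$-oracle ($\varrho\ge 1$), and a cost sharing mechanism $M$ whose induced GND game is $(\lambda,\mu)$-smooth with $\mu < 1/(\varrho \epsilon_1^2)$, where $\epsilon_1 = \frac{1+\epsilon}{1-\epsilon}$. If the approximate best response dynamic simulated in Alg-ABRD (with $M$ and the given $\epsilon$-cost shares) converges at some step $t \in [T]$, then the last strategy profile $p^t$ satisfies $$C(p^t) \leq \frac{\varrho \epsilon_1^2 \lambda}{1 - \varrho \epsilon_1^2 \mu} \cdot C^*.$$
   Context: GND instance: finite resource set $E$; requests $i \in [N]$, each with a reply collection $P_i \subseteq 2^E$ and a weight vector $w_i \in \mathbb{Z}_{\geq 1}^E$; constants $q \in \mathbb{Z}_{\ge 1}$, $\alpha_1,\dots,\alpha_q > 1$; for each $e$, $\sigma_e \geq 0$ and $\xi_{e,j} \geq 0$ (at least one $\xi_{e,j}>0$), and cost function $F_e(0)=0$, $F_e(l)=\sigma_e+\sum_j \xi_{e,j} l^{\alpha_j}$ for $l>0$. A strategy profile is $p=(p_1,\dots,p_N)\in P = P_1\times\dots\times P_N$; load $l_e^p=\sum_{i: e\in p_i} w_i(e)$; total cost $C(p)=\sum_e F_e(l_e^p)$; $C^*=\min_{p\in P} C(p)$. Notation $p_{-i}$ denotes $p$ without coordinate $i$ and $(p'_i,p_{-i})$ replaces the $i$-th coordinate by $p'_i$. A reply $\varrho$-oracle, given a reply collection $R$ and tolls $\tau:E\to\mathbb{R}_{>0}$, returns $r \in R$ with $\sum_{e\in r}\tau(e) \le \varrho \sum_{e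 \in r'}\tau(e)$ for all $r'\in R$. A cost sharing mechanism (CSM) $M=\{f_{i,e}\}$ assigns cost shares $f_{i,e}(p) \geq 0$ with $\sum_i f_{i,e}(p) = F_e(l_e^p)$; it is separable and uniform: $f_{i,e}(p)=0$ if $e \notin p_i$, and $f_{i,e}(p)$ depends only on $w_i(e)$ and the multiset of weights $w_{i'}(e)$ of the other players $i'$ with $e \in p_{i'}$. Player $i$'s individual cost is $C_i(p)=\sum_e f_{i,e}(p)$. The induced GND game (players $i$ with strategy spaces $P_i$ and costs $C_i$) is $(\lambda,\mu)$-smooth, for $\lambda>0$, $0<\mu<1$, if $\sum_i C_i(p'_i,p_{-i}) \le \lambda C(p') + \mu C(p)$ for all $p,p' \in P$. Alg-ABRD: fix small $\epsilon>0$ and $\epsilon_1=\frac{1+\epsilon}{1-\epsilon}$. Assume values $\widetilde f_{i,e}(p)$ are fixed for all $i,e,p$ with $(1-\epsilon) f_{i,e}(p) \le \widetilde f_{i,e}(p) \le (1+\epsilon) f_{i,e}(p)$, and set $\widetilde C_i(p)=\sum_e \widetilde f_{i,e}(p)$. Initial profile $p^0$: for each $i$, $p^0_i$ is the oracle's output on $P_i$ with tolls $\tau_i^0(e)=F_e(w_i(e))$. For $t=1,\dots,T$: for every $i$ compute $p'_i \in P_i$ with $\widetilde C_i(p'_i,p^{t-1}_{-i}) \le \varrho\, \widetilde C_i(p''_i,p^{t-1}_{-i})$ for all $p''_i\in P_i$ (obtained by calling the oracle with tolls $\tau(e)=\widetilde f_{i,e}$ of $i$ on $e$ when $i$ joins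 the current users of $e$), and let $\delta_i^t=\widetilde C_i(p^{t-1}) - \epsilon_1 \widetilde C_i(p'_i,p^{t-1}_{-i})$. If $\delta_i^t \le 0$ for all $i$, set $p^t=p^{t-1}$ and stop (the dynamic ''converges at step $t$''). Otherwise let $\Delta^t=\sum_i \delta_i^t$, pick $j$ with $\delta_j^t>0$ and $\delta_j^t \ge \Delta^t/N$, and set $p^t=(p'_j,p^{t-1}_{-j})$. Finally output the generated profile $p^{t^*}$ of minimum total cost $C$. *)

From HB Require Import structures.
From mathcomp Require Import all_boot all_order all_algebra.
From mathcomp Require Import reals exp.
Set Implicit Arguments. Unset Strict Implicit. Unset Printing Implicit Defensive.
Import Order.TTheory GRing.Theory Num.Theory.
Local Open Scope ring_scope.

Section GND.
Variables (R : realType) (E : finType) (N : nat).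

Definition profile := {ffun 'I_N -> {set E}}.

Definition feasible (P : 'I_N -> {set {set E}}) (p : profile) : Prop :=
  forall i, p i \in P i.

Definition upd (p : profile) (i : 'I_N) (r : {set E}) : profile :=
  [ffun k => if k == i then r else p k].

Definition load (w : 'I_N -> E -> nat) (p : profile) (e : E) : nat :=
  (\sum_(i < N | e \in p i) w i e)%N.

Definition costF (q : nat) (alpha : 'I_q -> R) (sigma : E -> R)
  (xi : E -> 'I_q -> R) (e : E) (l : nat) : R :=
  if l == 0%N then 0 else sigma e + \sum_(j < q) xi e j * powR (l%:R) (alpha j).

Definition totalC (F : E -> nat -> R) (w : 'I_N -> E -> nat) (p : profile) : R :=
  \sum_(e : E) F e (load w p e).

(* multiset (as a sequence) of weights on e of the players other than i using e *)
Definition others_weights (w : 'I_N -> E -> nat) (p : profile) (i : 'I_N) (e : E)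
  : seq nat := [seq w k e | k <- enum 'I_N & (k != i) && (e \in p k)].

Definition is_CSM (P : 'I_N -> {set {set E}}) (w : 'I_N -> E -> nat)
  (F : E -> nat -> R) (f : 'I_N -> E -> profile -> R) : Prop :=
  [/\ (forall p i e, feasible P p -> 0 <= f i e p),
      (forall p e, feasible P p -> \sum_(i < N) f i e p = F e (load w p e)),
      (forall p i e, feasible P p -> e \notin p i -> f i e p = 0) &
      (forall p p' i i' e, feasible P p -> feasible P p' ->
         e \in p i -> e \in p' i' -> w i e = w i' e ->
         perm_eq (others_weights w p i e) (others_weights w p' i' e) ->
         f i e p = f i' e p')].

Definition indC (f : 'I_N -> E -> profile -> R) (i : 'I_N) (p : profile) : R :=
  \sum_(e : E) f i e p.

Definition smooth_game (P : 'I_N -> {set {set E}}) (w : 'I_N -> E -> nat)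
  (F : E -> nat -> R) (f : 'I_N -> E -> profile -> R) (lam mu : R) : Prop :=
  [/\ 0 < lam, 0 < mu, mu < 1 &
      forall p p', feasible P p -> feasible P p' ->
        \sum_(i < N) indC f i (upd p i (p' i)) <= lam * totalC F w p' + mu * totalC F w p].

Definition reply_oracle (rho : R) (orc : {set {set E}} -> (E -> R) -> {set E}) : Prop :=
  forall (Rc : {set {set E}}) (tau : E -> R), Rc != set0 -> (forall e, 0 < tau e) ->
    orc Rc tau \in Rc /\
    forall r', r' \in Rc -> \sum_(e in orc Rc tau) tau e <= rho * \sum_(e in r') tau e.

Definition eps_shares (P : 'I_N -> {set {set E}}) (eps : R)
  (f ft : 'I_N -> E -> profile -> R) : Prop :=
  forall i e p, feasible P p ->
    (1 - eps) * f i e p <= ft i e p /\ ft i e p <= (1 + eps) * f i e p.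

Definition eps1 (eps : R) : R := (1 + eps) / (1 - eps).

Definition delta (ft : 'I_N -> E -> profile -> R) (eps : R) (pp : profile)
  (i : 'I_N) (r : {set E}) : R :=
  indC ft i pp - eps1 eps * indC ft i (upd pp i r).

(* A run of Alg-ABRD, with profiles ps 0, ps 1, ..., and responses resp s i
   (the p'_i computed at step s), which converges at step t in [1, T]. *)
Definition ABRD_run_converging_at (P : 'I_N -> {set {set E}}) (w : 'I_N -> E -> nat)
  (F : E -> nat -> R) (rho eps : R) (orc : {set {set E}} -> (E -> R) -> {set E})
  (ft : 'I_N -> E -> profile -> R) (T t : nat)
  (ps : nat -> profile) (resp : nat -> 'I_N -> {set E}) : Prop :=
  [/\ (1 <= t <= T)%N,
      (forall i, ps 0%N i = orc (P i) (fun e => F e (w i e))),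
      (forall s i, (1 <= s <= t)%N ->
         resp s i \in P i /\
         forall r'', r'' \in P i ->
           indC ft i (upd (ps s.-1) i (resp s i)) <= rho * indC ft i (upd (ps s.-1) i r'')),
      (forall s, (1 <= s < t)%N ->
         (exists i, 0 < delta ft eps (ps s.-1) i (resp s i)) /\
         exists j, [/\ 0 < delta ft eps (ps s.-1) j (resp s j),
           (\sum_(i < N) delta ft eps (ps s.-1) i (resp s i)) / N%:R
             <= delta ft eps (ps s.-1) j (resp s j) &
           ps s = upd (ps s.-1) j (resp s j)]) &
      ((forall i, delta ft eps (ps t.-1) i (resp t i) <= 0) /\ ps t = ps t.-1)].

End GND.

From HB Require Import structures.
From mathcomp Require Import all_boot all_order all_algebra.
From mathcomp Require Import reals exp.
From mathcomp Require Import ring.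
Set Implicit Arguments.
Unset Strict Implicit.
Unset Printing Implicit Defensive.

Import Order.TTheory GRing.Theory Num.Theory.
Local Open Scope ring_scope.

(* When the dynamic stops, every player i has delta_i <= 0, i.e. no rho-approximate
   best response improves its approximate cost by a factor eps1.  Passing from the
   eps-approximate shares back to the true shares costs one more factor eps1, so the
   final profile p satisfies C_i(p) <= rho eps1^2 C_i(p*_i, p_{-i}) for every i.
   Summing over i and applying (lambda, mu)-smoothness gives
   C(p) <= rho eps1^2 (lambda C^* + mu C(p)), which rearranges to the bound since
   rho eps1^2 mu < 1. *)

Lemma smooth_fixpoint_bound (R : realFieldType) (K lam mu C Cstar : R) :
  0 < K -> K * mu < 1 -> C <= K * (lam * Cstar + mu * C) ->
  C <= K * lam / (1 - K * mu) * Cstar.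
Proof.
move=> K0 Kmu le_C.
rewrite mulrAC ler_pdivlMr ?subr_gt0 // mulrBr mulr1 lerBlDr.
by apply: (le_trans le_C); rewrite mulrDr [C * _]mulrC !mulrA.
Qed.

Lemma eps1_mulE (R : realType) (eps : R) : eps < 1 ->
  1 + eps = eps1 eps * (1 - eps).
Proof. by move=> eps_lt1; rewrite /eps1 divfK // subr_eq0 gt_eqF. Qed.

Lemma eps1_gt0 (R : realType) (eps : R) : 0 < eps -> eps < 1 -> 0 < eps1 eps.
Proof. by move=> eps_gt0 eps_lt1; rewrite divr_gt0 ?subr_gt0 // ltr_wpDr // ltW. Qed.

Lemma costF_gt0 (R : realType) (E : finType) (q : nat) (alpha : 'I_q -> R)
    (sigma : E -> R) (xi : E -> 'I_q -> R) (e : E) (l : nat) :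
  (forall e, 0 <= sigma e) -> (forall e j, 0 <= xi e j) -> (exists j, 0 < xi e j) ->
  (0 < l)%N -> 0 < costF alpha sigma xi e l.
Proof.
move=> sigma_ge0 xi_ge0 [j xi_gt0]; rewrite /costF; case: l => [//|l] _ /=.
have term_gt0 : 0 < xi e j * powR l.+1%:R (alpha j).
  by rewrite mulr_gt0 // powR_gt0 // ltr0n.
have sum_gt0 : 0 < \sum_(k < q) xi e k * powR l.+1%:R (alpha k).
  rewrite (bigD1 j) //= ltr_wpDr //.
  by rewrite sumr_ge0 // => k _; rewrite mulr_ge0 // powR_ge0.
by rewrite ltr_wpDl.
Qed.

Section Dynamics.
Variables (R : realType) (E : finType) (N : nat).
Variables (P : 'I_N -> {set {set E}}) (w : 'I_N -> E -> nat) (F : E -> nat -> R).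
Implicit Types (p : profile E N) (f ft : 'I_N -> E -> profile E N -> R).

Lemma feasible_upd p i r : feasible P p -> r \in P i -> feasible P (upd p i r).
Proof. by move=> fp rP k; rewrite ffunE; case: eqP => [->|]. Qed.

Lemma totalC_indC f p : is_CSM P w F f -> feasible P p ->
  totalC F w p = \sum_(i < N) indC f i p.
Proof.
case=> _ budget _ _ fp; rewrite /totalC /indC exchange_big /=.
by apply: eq_bigr => e _; rewrite budget.
Qed.

Lemma indC_eps_shares f ft eps i p : eps_shares P eps f ft -> feasible P p ->
  (1 - eps) * indC f i p <= indC ft i p /\ indC ft i p <= (1 + eps) * indC f i p.
Proof.
move=> shares fp; rewrite /indC !mulr_sumr; split; apply: ler_sum => e _;
  by case: (shares i e p fp).
Qed.

Lemma eps_stable_indC_le f ft rho eps i p r0 r :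
  0 < eps -> eps < 1 -> 0 < rho -> eps_shares P eps f ft ->
  feasible P p -> feasible P (upd p i r) ->
  indC ft i p <= eps1 eps * indC ft i (upd p i r0) ->
  indC ft i (upd p i r0) <= rho * indC ft i (upd p i r) ->
  indC f i p <= rho * eps1 eps ^+ 2 * indC f i (upd p i r).
Proof.
move=> eps_gt0 eps_lt1 rho_gt0 shares fp fpr stable best.
have [lo_p _] := indC_eps_shares i shares fp.
have [_ hi_r] := indC_eps_shares i shares fpr.
have e1_gt0 := eps1_gt0 eps_gt0 eps_lt1.
rewrite -(ler_pM2l (_ : 0 < 1 - eps)) ?subr_gt0 //.
apply: (le_trans lo_p); apply: (le_trans stable).
have -> : (1 - eps) * (rho * eps1 eps ^+ 2 * indC f i (upd p i r))
        = eps1 eps * (rho * (eps1 eps * (1 - eps) * indC f i (upd p i r))).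
  by ring.
rewrite -eps1_mulE // ler_pM2l //; apply: (le_trans best).
by rewrite ler_pM2l.
Qed.

Variables (rho eps : R) (orc : {set {set E}} -> (E -> R) -> {set E}).
Variables (ft : 'I_N -> E -> profile E N -> R) (T t : nat).
Variables (ps : nat -> profile E N) (resp : nat -> 'I_N -> {set E}).
Hypothesis run : ABRD_run_converging_at P w F rho eps orc ft T t ps resp.

Lemma ABRD_feasible : (forall i, P i != set0) -> reply_oracle rho orc ->
  (forall i e, 0 < F e (w i e)) -> forall s, (s < t)%N -> feasible P (ps s).
Proof.
move=> P_neq0 oracle tolls_gt0; case: run => _ init best steps _.
elim=> [_ | s IH lt_st] i.
  by rewrite init; case: (oracle (P i) _ (P_neq0 i) (tolls_gt0 i)).
have [_ [j [_ _ ->]]] := steps s.+1 lt_st.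
apply: feasible_upd; first exact/IH/ltnW.
by case: (best s.+1 j); rewrite /= ?(ltnW lt_st).
Qed.

Lemma ABRD_converged_eps_stable f i r :
  0 < eps -> eps < 1 -> 0 < rho -> eps_shares P eps f ft ->
  feasible P (ps t) -> r \in P i ->
  indC f i (ps t) <= rho * eps1 eps ^+ 2 * indC f i (upd (ps t) i r).
Proof.
move=> eps_gt0 eps_lt1 rho_gt0 shares fp rP.
have [/andP[t_ge1 _] _ best _ [stop ps_t]] := run.
rewrite ps_t in fp *.
apply: (eps_stable_indC_le (r0 := resp t i) eps_gt0 eps_lt1 rho_gt0 shares) => //.
- exact: feasible_upd.
- by have := stop i; rewrite /delta subr_le0.
- by case: (best t i); rewrite ?t_ge1 ?leqnn // => _; apply.
Qed.

End Dynamics.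

Theorem lemma5p1 (R : realType) (E : finType) (N : nat)
  (P : 'I_N -> {set {set E}}) (w : 'I_N -> E -> nat)
  (q : nat) (alpha : 'I_q -> R) (sigma : E -> R) (xi : E -> 'I_q -> R)
  (rho : R) (orc : {set {set E}} -> (E -> R) -> {set E})
  (f ft : 'I_N -> E -> profile E N -> R) (lam mu eps : R)
  (T t : nat) (ps : nat -> profile E N) (resp : nat -> 'I_N -> {set E}) :
  (forall i, P i != set0) ->
  (forall i e, (1 <= w i e)%N) ->
  (1 <= q)%N ->
  (forall j, 1 < alpha j) ->
  (forall e, 0 <= sigma e) ->
  (forall e j, 0 <= xi e j) ->
  (forall e, exists j, 0 < xi e j) ->
  1 <= rho ->
  reply_oracle rho orc ->
  is_CSM P w (costF alpha sigma xi) f ->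
  smooth_game P w (costF alpha sigma xi) f lam mu ->
  0 < eps -> eps < 1 ->
  mu < 1 / (rho * eps1 eps ^+ 2) ->
  eps_shares P eps f ft ->
  ABRD_run_converging_at P w (costF alpha sigma xi) rho eps orc ft T t ps resp ->
  forall pstar, feasible P pstar ->
    totalC (costF alpha sigma xi) w (ps t)
      <= (rho * eps1 eps ^+ 2 * lam) / (1 - rho * eps1 eps ^+ 2 * mu)
         * totalC (costF alpha sigma xi) w pstar.
Proof.
move=> P_neq0 w_ge1 _ _ sigma_ge0 xi_ge0 xi_pos rho_ge1 oracle csm smooth
  eps_gt0 eps_lt1 mu_lt shares run pstar fpstar.
set K := rho * eps1 eps ^+ 2.
have rho_gt0 : 0 < rho by apply: lt_le_trans rho_ge1.
have K_gt0 : 0 < K by rewrite mulr_gt0 // exprn_gt0 // eps1_gt0.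
have [/andP[t_ge1 _] _ _ _ [_ ps_t]] := run.
have fp : feasible P (ps t).
  rewrite ps_t; apply: (ABRD_feasible run) => // [i e|]; last by rewrite prednK.
  by apply: costF_gt0.
case: smooth => _ _ _ smoothP.
have Kmu_lt1 : K * mu < 1 by rewrite -ltr_pdivlMl // mulr1 -[K^-1]div1r.
have stable i : indC f i (ps t) <= K * indC f i (upd (ps t) i (pstar i)).
  exact: (ABRD_converged_eps_stable run).
apply: smooth_fixpoint_bound => //.
rewrite {1}(totalC_indC csm fp).
apply: le_trans _ (ler_wpM2l (ltW K_gt0) (smoothP _ _ fp fpstar)).
by rewrite mulr_sumr; apply: ler_sum => i _.
Qed.
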